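(* If an acyclic VCCR $f$ satisfies Positive Involvement in Defeat and Majority Defeat, then the VSCC $\overline f$ satisfies Tolerant Positive Involvement. In particular, the Split Cycle VSCC $\overline{sc}$ and the Weighted Covering VSCC $\overline{wc}$ satisfy Tolerant Positive Involvement, since $sc$ and $wc$ both satisfy Positive Involvement in Defeat and Majority Defeat.
   Context: Profiles: $\mathbf P:V\to\mathcal L(X)$, $V$ nonempty finite set of voters, $X=X(\mathbf P)$ nonempty finite set of candidates, $\mathcal L(X)$ strict linear orders. $\mathrm{Margin}_{\mathbf P}(x,y)$ = #voters ranking $x$ above $y$ minus #ranking $y$ above $x$; $x$ majority preferred to $y$ if $>0$. A majority path: sequence of candidates with positive consecutive margins; strength = minimum of those margins. A VCCR $f$ assigns to each profile an asymmetric relation $f(\mathbf P)$ on $X(\mathbf P)$; it is acyclic if every $f(\mathbf P)$ has no cycle. $\overline f(\mathbf P)=\{x: \text{no } y \text{ with } (y,x)\in f(\mathbf P)\}$ (a VSCC when $f$ is acyclic). $sc$: $(x,y)\in sc(\mathbf P)$ iff $\mathrm{Margin}_{\mathbf P}(x,y)>0$ exceeds the strength of every majority path from $y$ to $x$. $wc$: $(x,y)\in wc(\mathbf P)$ iff $\mathrm{Margin}_{\mathbf P}(x,y)>0$ and $\mathrm{Margin}_{\mathbf P}(x,z)\ge\mathrm{Margin}_{\mathbf P}(y,z)$ for all $z$. Positive Involvement in Defeat: if $(x,y)\notin f(\mathbf P)$ and $\mathbf P'$ adds one new voter ranking $y$ above $x$, then $(x,y)\notin f(\mathbf P')$. Majority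 Defeat: $(x,y)\in f(\mathbf P)$ implies $\mathrm{Margin}_{\mathbf P}(x,y)>0$. A VSCC $F$ satisfies Tolerant Positive Involvement if whenever $x\in F(\mathbf P)$ and $\mathbf P'$ is obtained by adding one new voter who ranks $x$ above every other candidate $y$ such that $x$ is not majority preferred to $y$ in $\mathbf P$, then $x\in F(\mathbf P')$. *)

From mathcomp Require Import all_boot all_order all_algebra.
Set Implicit Arguments. Unset Strict Implicit. Unset Printing Implicit Defensive.
Import Order.TTheory GRing.Theory Num.Theory.
Local Open Scope ring_scope.

(* A profile: a nonempty finite set of voters V (duplicate-free list),
   a nonempty finite set of candidates X (duplicate-free list), and for each
   voter v in V a ballot, a strict linear order on X given as a list
   (best first) that is a permutation of X. *)
Record profile := Profile {
  voters : seq nat;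
  cands : seq nat;
  ballot : nat -> seq nat;
  voters_uniq : uniq voters;
  cands_uniq : uniq cands;
  voters_ne : voters != [::];
  cands_ne : cands != [::];
  ballot_perm : forall v, v \in voters -> perm_eq (ballot v) cands
}.

Definition prefers (P : profile) (v x y : nat) : bool :=
  (index x (ballot P v) < index y (ballot P v))%N.

Definition Margin (P : profile) (x y : nat) : int :=
  (count (fun v => prefers P v x y) (voters P))%:Z
  - (count (fun v => prefers P v y x) (voters P))%:Z.

Definition majority_pref (P : profile) (x y : nat) : Prop := 0 < Margin P x y.

Fixpoint mpath (P : profile) (a : nat) (s : seq nat) : Prop :=
  match s with
  | [::] => True
  | b :: s' => b \in cands P /\ 0 < Margin P a b /\ mpath P b s'
  end.

Fixpoint strength (P : profile) (a : nat) (s : seq nat) : int :=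
  match s with
  | [::] => 0
  | b :: s' =>
      if s' is [::] then Margin P a b
      else Num.min (Margin P a b) (strength P b s')
  end.

Definition majority_path (P : profile) (y : nat) (s : seq nat) (x : nat) : Prop :=
  y \in cands P /\ s <> [::] /\ last y s = x /\ mpath P y s.

Definition VCCR := profile -> nat -> nat -> Prop.
Definition VSCC := profile -> nat -> Prop.

Definition is_VCCR (f : VCCR) : Prop :=
  forall P x y, f P x y -> [/\ x \in cands P, y \in cands P & ~ f P y x].

Fixpoint Rpath (R : nat -> nat -> Prop) (x : nat) (s : seq nat) : Prop :=
  match s with
  | [::] => True
  | y :: s' => R x y /\ Rpath R y s'
  end.

Definition acyclic (f : VCCR) : Prop :=
  forall P x s, ~ Rpath (f P) x (rcons s x).

Definition fbar (f : VCCR) : VSCC :=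
  fun P x => x \in cands P /\ forall y, ~ f P y x.

Definition add_voter (P P' : profile) (v : nat) : Prop :=
  [/\ v \notin voters P,
      voters P' =i v :: voters P,
      cands P' =i cands P &
      forall u, u \in voters P -> ballot P' u = ballot P u].

Definition pos_involvement_in_defeat (f : VCCR) : Prop :=
  forall P P' v x y, x \in cands P -> y \in cands P ->
    ~ f P x y -> add_voter P P' v -> prefers P' v y x -> ~ f P' x y.

Definition majority_defeat (f : VCCR) : Prop :=
  forall P x y, f P x y -> 0 < Margin P x y.

Definition tolerant_pos_involvement (F : VSCC) : Prop :=
  forall P P' v x, F P x -> add_voter P P' v ->
    (forall y, y \in cands P -> y != x -> ~ majority_pref P x y ->
       prefers P' v x y) ->
    F P' x.

Definition sc : VCCR := fun P x y =>
  [/\ x \in cands P, y \in cands P, 0 < Margin P x y &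
      forall s, majority_path P y s x -> strength P y s < Margin P x y].

Definition wc : VCCR := fun P x y =>
  [/\ x \in cands P, y \in cands P, 0 < Margin P x y &
      forall z, z \in cands P -> Margin P y z <= Margin P x z].

(** A new voter changes every margin by at most one, and lowers [Margin x y]
    when ranking [y] above [x].  Suppose [x] is undefeated in [P] but [y]
    defeats [x] once the voter is added.  By Majority Defeat [y] is then
    majority preferred to [x], so [x] was not majority preferred to [y] in [P];
    hence the voter ranks [x] above [y], and Positive Involvement in Defeat
    says [y] still does not defeat [x].  For Split Cycle, a voter ranking [y]
    above [x] lowers [Margin x y] by exactly one and every path strength by at
    most one, so a majority path from [y] to [x] that prevents [x] from
    defeating [y] keeps doing so.  For Weighted Covering, such a voter helps
    [y] against every [z] at least as much as [x]. *)
From mathcomp Require Import all_boot all_order all_algebra.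
From mathcomp Require Import zify.
Import Order.TTheory GRing.Theory Num.Theory.
Set Implicit Arguments. Unset Strict Implicit.
Local Open Scope ring_scope.

Definition voter_margin (P : profile) (v a b : nat) : int :=
  (prefers P v a b : nat)%:Z - (prefers P v b a : nat)%:Z.

Lemma voter_margin_ge (P : profile) (v a b : nat) : -1 <= voter_margin P v a b.
Proof. by rewrite /voter_margin; case: (prefers P v a b); case: (prefers P v b a). Qed.

Lemma voter_margin_pref (P : profile) (v a b : nat) :
  prefers P v b a -> voter_margin P v a b = -1.
Proof. by rewrite /voter_margin /prefers => lt_ba; rewrite lt_ba ltnNge ltnW. Qed.

Lemma voter_margin_mono (P : profile) (v x y z : nat) :
  prefers P v y x -> voter_margin P v x z <= voter_margin P v y z.
Proof.
rewrite /voter_margin /prefers.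
set iy := index y _; set ix := index x _; set iz := index z _ => lt_yx.
by case: (ltnP ix iz); case: (ltnP iz ix); case: (ltnP iy iz); case: (ltnP iz iy)
  => /= *; lia.
Qed.

Lemma margin_antisym (P : profile) (a b : nat) : Margin P a b = - Margin P b a.
Proof. by rewrite /Margin opprB. Qed.

Lemma margin_diag (P : profile) (a : nat) : Margin P a a = 0.
Proof. by rewrite /Margin subrr. Qed.

Lemma strength_cons_le (Q : profile) (a b : nat) (s : seq nat) :
  strength Q a (b :: s) <= Margin Q a b
  /\ (s != [::] -> strength Q a (b :: s) <= strength Q b s).
Proof. by case: s => [|c s] //=; split=> [|_]; rewrite ge_min lexx ?orbT. Qed.

Section AddVoter.

Variables (P P' : profile) (v : nat).
Hypothesis addv : add_voter P P' v.

Lemma mem_cands_add_voter (a : nat) : (a \in cands P') = (a \in cands P).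
Proof. by case: addv. Qed.

Lemma count_add_voter (p : pred nat) :
  count p (voters P') = (p v + count p (voters P))%N.
Proof.
case: addv => v_new eq_voters _ _.
have voters_perm : perm_eq (voters P') (v :: voters P).
  by apply: uniq_perm; rewrite /= ?v_new ?voters_uniq.
by rewrite (permP voters_perm).
Qed.

Lemma margin_add_voter (a b : nat) :
  Margin P' a b = Margin P a b + voter_margin P' v a b.
Proof.
have [_ _ _ same_ballot] := addv.
have old_count c d : count (fun u => prefers P' u c d) (voters P) =
                     count (fun u => prefers P u c d) (voters P).
  by apply: eq_in_count => u uP; rewrite /prefers same_ballot.
rewrite /Margin /voter_margin !count_add_voter !old_count; lia.
Qed.

Lemma margin_add_voter_ge (a b : nat) : Margin P a b - 1 <= Margin P' a b.
Proof. by rewrite margin_add_voter lerD2l voter_margin_ge. Qed.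

Lemma margin_add_voter_pref (a b : nat) :
  prefers P' v b a -> Margin P' a b = Margin P a b - 1.
Proof. by move=> pref_ba; rewrite margin_add_voter voter_margin_pref. Qed.

Lemma strength_add_voter (a : nat) (s : seq nat) :
  s != [::] -> strength P a s - 1 <= strength P' a s.
Proof.
elim: s a => [//|b s IH] a _.
have [le_margin le_tail] := strength_cons_le P a b s.
case: s IH le_margin le_tail => [|c s] IH le_margin le_tail /=.
  exact: margin_add_voter_ge.
rewrite le_min; apply/andP; split.
- exact: le_trans (lerB le_margin (lexx 1)) (margin_add_voter_ge a b).
- exact: le_trans (lerB (le_tail isT) (lexx 1)) (IH b isT).
Qed.

Lemma mpath_add_voter (a : nat) (s : seq nat) :
  mpath P a s -> 1 < strength P a s -> mpath P' a s.
Proof.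
elim: s a => [//|b s IH] a /= [bP [_ path_s]] gt1_str.
have [le_margin le_tail] := strength_cons_le P a b s.
split; first by rewrite mem_cands_add_voter.
split.
  have := margin_add_voter_ge a b; move: (lt_le_trans gt1_str le_margin); lia.
case: (eqVneq s [::]) => [-> //|s_ne].
by apply: IH => //; apply: lt_le_trans gt1_str (le_tail s_ne).
Qed.

End AddVoter.

Lemma fbar_tolerant_pos_involvement (f : VCCR) :
  is_VCCR f -> pos_involvement_in_defeat f -> majority_defeat f ->
  tolerant_pos_involvement (fbar f).
Proof.
move=> vccr_f pid md P P' v x [xP undefeated_x] addv pref_x.
split; first by rewrite (mem_cands_add_voter addv).
move=> y f_yx.
have margin_yx := md _ _ _ f_yx.
have [yP' _ _] := vccr_f _ _ _ f_yx.
have yP : y \in cands P by rewrite -(mem_cands_add_voter addv).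
have y_neq_x : y != x by apply: contraTneq margin_yx => ->; rewrite margin_diag.
have [maj_xy|no_maj_xy] := boolP (0 < Margin P x y).
  have := margin_add_voter_ge addv x y; have := margin_antisym P' x y; lia.
apply: (pid P P' v y x yP xP (undefeated_x y) addv _ f_yx).
by apply: pref_x => //; rewrite /majority_pref (negbTE no_maj_xy).
Qed.

Lemma is_VCCR_majority (f : VCCR) :
  (forall P x y, f P x y ->
     [/\ x \in cands P, y \in cands P & 0 < Margin P x y]) ->
  is_VCCR f.
Proof.
move=> f_maj P x y /f_maj[xP yP margin_xy]; split=> // /f_maj[_ _].
by rewrite margin_antisym oppr_gt0 ltNge (ltW margin_xy).
Qed.

Lemma sc_is_VCCR : is_VCCR sc.
Proof. by apply: is_VCCR_majority => P x y []. Qed.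

Lemma wc_is_VCCR : is_VCCR wc.
Proof. by apply: is_VCCR_majority => P x y []. Qed.

Lemma sc_majority_defeat : majority_defeat sc.
Proof. by move=> P x y []. Qed.

Lemma wc_majority_defeat : majority_defeat wc.
Proof. by move=> P x y []. Qed.

Lemma sc_pos_involvement_in_defeat : pos_involvement_in_defeat sc.
Proof.
move=> P P' v x y xP yP not_sc addv pref_yx [_ yP' margin_xy' blocked'].
have margin_xy := margin_add_voter_pref addv pref_yx.
apply: not_sc; split=> //; first lia.
move=> s [_ [s_ne [last_s path_s]]]; rewrite ltNge; apply/negP => le_str.
have path_s' : mpath P' y s by apply: (mpath_add_voter addv) => //; lia.
have := blocked' s (conj yP' (conj s_ne (conj last_s path_s'))).
have := strength_add_voter addv y (introN eqP s_ne); lia.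
Qed.

Lemma wc_pos_involvement_in_defeat : pos_involvement_in_defeat wc.
Proof.
move=> P P' v x y xP yP not_wc addv pref_yx [_ _ margin_xy' covers'].
have margin_xy := margin_add_voter_pref addv pref_yx.
apply: not_wc; split=> //; first lia.
move=> z zP; have := covers' z; rewrite (mem_cands_add_voter addv) => /(_ zP).
rewrite !(margin_add_voter addv).
have := voter_margin_mono z pref_yx; lia.
Qed.

Theorem proposition5p12 :
  (forall f : VCCR, is_VCCR f -> acyclic f ->
     pos_involvement_in_defeat f -> majority_defeat f ->
     tolerant_pos_involvement (fbar f))
  /\ (pos_involvement_in_defeat sc /\ majority_defeat sc
      /\ tolerant_pos_involvement (fbar sc))
  /\ (pos_involvement_in_defeat wc /\ majority_defeat wc
      /\ tolerant_pos_involvement (fbar wc)).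
Proof.
(* Acyclicity only makes [fbar f] a VSCC; the argument does not need it. *)
split; first by move=> f vccr_f _; exact: fbar_tolerant_pos_involvement.
split; (split; [|split]).
- exact: sc_pos_involvement_in_defeat.
- exact: sc_majority_defeat.
- exact: fbar_tolerant_pos_involvement
    sc_is_VCCR sc_pos_involvement_in_defeat sc_majority_defeat.
- exact: wc_pos_involvement_in_defeat.
- exact: wc_majority_defeat.
- exact: fbar_tolerant_pos_involvement
    wc_is_VCCR wc_pos_involvement_in_defeat wc_majority_defeat.
Qed.
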